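(* There exist absolute constants $c>0$ and $n_0$ such that for every $n\ge n_0$ and every $p$ with $\frac{100}{n}\le p\le 1-\frac{100}{n}$, if $G\sim G(n,p)$ then with probability at least $1-e^{-cn}$, $G$ contains at least $n/100$ pairwise vertex-disjoint induced copies of $P_3$.
   Context: $G(n,p)$ is the binomial random graph on $n$ labelled vertices. $P_3$ denotes the path with three edges (four vertices). *)

From HB Require Import structures.
From mathcomp Require Import all_boot all_order all_algebra.
From mathcomp Require Import reals Rstruct.
From mathcomp Require Import sequences.
From mathcomp.analysis Require Import exp.
Set Implicit Arguments. Unset Strict Implicit. Unset Printing Implicit Defensive.
Import Order.TTheory GRing.Theory Num.Theory.
Local Open Scope ring_scope.

Definition pairs (n : nat) : {set {set 'I_n}} := [set e : {set 'I_n} | #|e| == 2%N].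

Definition is_graph (n : nat) (G : {set {set 'I_n}}) : bool := G \subset pairs n.

Definition adj (n : nat) (G : {set {set 'I_n}}) (u v : 'I_n) : bool :=
  (u != v) && ([set u; v] \in G).

Definition gnp_prob (R : pzRingType) (n : nat) (p : R) (A : pred {set {set 'I_n}}) : R :=
  \sum_(G : {set {set 'I_n}} | is_graph G && A G)
     p ^+ #|G| * (1 - p) ^+ (#|pairs n| - #|G|).

Definition quad (n : nat) := ('I_n * 'I_n * 'I_n * 'I_n)%type.

Definition qverts (n : nat) (x : quad n) : {set 'I_n} :=
  let: (a, b, c, d) := x in [set a; b; c; d].

Definition induced_P3 (n : nat) (G : {set {set 'I_n}}) (x : quad n) : bool :=
  let: (a, b, c, d) := x in
  [&& uniq [:: a; b; c; d], adj G a b, adj G b c, adj G c d,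
      ~~ adj G a c, ~~ adj G b d & ~~ adj G a d].

Definition has_disjoint_P3s (n : nat) (G : {set {set 'I_n}}) (k : nat) : bool :=
  [exists S : {set quad n},
    [&& (k <= #|S|)%N,
        [forall x in S, induced_P3 G x] &
        [forall x in S, forall y in S, (x != y) ==> [disjoint qverts x & qverts y]]]].

From HB Require Import structures.
From mathcomp Require Import all_boot all_order all_algebra.
From mathcomp Require Import reals Rstruct.
From mathcomp Require Import sequences.
From mathcomp.analysis Require Import exp.
From mathcomp Require Import zify lra.
Set Implicit Arguments. Unset Strict Implicit. Unset Printing Implicit Defensive.
Import Order.TTheory GRing.Theory Num.Theory.

(* Take a maximum family S of vertex-disjoint induced P_3's of G. If |S| < n/100, the
   vertices not covered by S span more than 24n/25 vertices and induce no P_3, i.e. a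
   cograph. By Seinsche's theorem a cograph on at least two vertices splits into two
   nonempty parts that are completely joined or completely non-adjacent; moving the
   smaller part aside and recursing on the larger one yields disjoint sets A, B with
   |A|, |B| >= 6n/25 such that all pairs between A and B are edges, or all are non-edges.
   For fixed A, B this has probability at most (1 - 100/n)^(|A||B|) <= e^(-4n), and a
   union bound over the at most 2^(2n+1) choices gives failure probability e^(-n). *)

Section Cographs.
Variable T : finType.
Implicit Types (r : rel T) (A B P Q X Y : {set T}).

Definition rel_induced_P3 r (a b c d : T) : bool :=
  [&& uniq [:: a; b; c; d], r a b, r b c, r c d, ~~ r a c, ~~ r b d & ~~ r a d].

Definition P3_free r X : Prop :=
  forall a b c d, a \in X -> b \in X -> c \in X -> d \in X -> ~~ rel_induced_P3 r a b c d.

Definition homogeneous_split r X : Prop :=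
  exists A B (t : bool), [/\ A :|: B = X, [disjoint A & B], A != set0, B != set0 &
    forall a b, a \in A -> b \in B -> r a b = t].

Definition compl_rel r : rel T := fun u v => (u != v) && ~~ r u v.

Lemma P3_freeS r X Y : Y \subset X -> P3_free r X -> P3_free r Y.
Proof. by move=> /subsetP sYX freeX a b c d *; apply: freeX; apply: sYX. Qed.

Lemma compl_rel_sym r : symmetric r -> symmetric (compl_rel r).
Proof. by move=> r_sym u v; rewrite /compl_rel eq_sym r_sym. Qed.

Lemma compl_rel_irr r : irreflexive (compl_rel r).
Proof. by move=> u; rewrite /compl_rel eqxx. Qed.

(* The complement of the path a-b-c-d is the path b-d-a-c. *)
Lemma P3_free_compl r X : symmetric r -> P3_free r X -> P3_free (compl_rel r) X.
Proof.
move=> r_sym freeX a b c d aX bX cX dX; apply/negP; rewrite /rel_induced_P3 /compl_rel /=.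
case/and5P=> + /andP[_ rab] /andP[_ rbc] /andP[_ rcd] /and3P[nac nbd nad].
rewrite /= !inE !negb_or => /and4P[/and3P[ab ac ad] /andP[bc bd] cd _].
move: nac nbd nad; rewrite ac bd ad /= !negbK => rac rbd rad.
move: (freeX b d a c bX dX aX cX); rewrite /rel_induced_P3 /= !inE.
rewrite [b == a]eq_sym [d == a]eq_sym [d == c]eq_sym.
rewrite (negPf ab) (negPf ac) (negPf ad) (negPf bc) (negPf bd) (negPf cd).
by rewrite rbd (r_sym d a) rad rac (r_sym b a) rab (r_sym d c) rcd rbc.
Qed.

Lemma homogeneous_split_compl r X :
  homogeneous_split (compl_rel r) X -> homogeneous_split r X.
Proof.
case=> A [B [t [defX AB A0 B0 homAB]]]; exists A, B, (~~ t); split=> // a b aA bB.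
have ab : a != b by apply: contraTneq bB => <-; rewrite (disjointFr AB aA).
by rewrite -(homAB a b aA bB) /compl_rel ab negbK.
Qed.

Section AddVertex.
Variable r : rel T.
Hypotheses (r_sym : symmetric r) (r_irr : irreflexive r).

Lemma rel_induced_P3_bridge P Q v x y z :
  [disjoint P & Q] -> v \notin P :|: Q -> (forall a b, a \in P -> b \in Q -> r a b = false) ->
  x \in P -> y \in P -> z \in Q -> r x y -> r v x -> ~~ r v y -> r v z ->
  rel_induced_P3 r y x v z.
Proof.
move=> PQ vPQ nPQ xP yP zQ rxy rvx nrvy rvz.
have neqPv a : a \in P -> (a == v) = false.
  by move=> aP; apply: contraNF vPQ => /eqP <-; rewrite inE aP.
have neqvQ a : a \in Q -> (v == a) = false.
  by move=> aQ; apply: contraNF vPQ => /eqP ->; rewrite inE aQ orbT.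
have neqPQ a b : a \in P -> b \in Q -> (a == b) = false.
  by move=> aP bQ; apply: contraTF bQ => /eqP <-; rewrite (disjointFr PQ aP).
have neqyx : (y == x) = false by apply: contraTF rxy => /eqP ->; rewrite r_irr.
rewrite /rel_induced_P3 /= !inE neqyx !neqPv // neqvQ // !neqPQ //.
by rewrite (r_sym y) rxy (r_sym x) rvx rvz (r_sym y) nrvy !nPQ.
Qed.

Lemma homogeneous_split_far_side P Q v x y :
  [disjoint P & Q] -> v \notin P :|: Q -> (forall a b, a \in P -> b \in Q -> r a b = false) ->
  P3_free r (v |: (P :|: Q)) -> Q != set0 ->
  x \in P -> y \in P -> r x y -> r v x -> ~~ r v y ->
  homogeneous_split r (v |: (P :|: Q)).
Proof.
move=> PQ vPQ nPQ freeX Q0 xP yP rxy rvx nrvy.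
have vQ : v \notin Q by apply: contra vPQ; rewrite inE orbC => ->.
have nvQ b : b \in Q -> r v b = false.
  move=> bQ; apply: contraTF (freeX y x v b _ _ _ _) => [rvb||||];
    rewrite ?inE ?yP ?xP ?bQ ?eqxx ?orbT //.
  by rewrite negbK; apply: (rel_induced_P3_bridge PQ).
exists Q, (v |: P), false; split=> //.
- by rewrite setUC -setUA setUC.
- by rewrite disjoint_sym -setI_eq0 setIUl setU_eq0 setI_eq0 disjoints1 vQ /= setI_eq0.
- by apply/set0Pn; exists v; rewrite !inE eqxx.
- move=> a b aQ; rewrite !inE => /orP[/eqP -> | bP]; first by rewrite r_sym nvQ.
  by rewrite r_sym nPQ.
Qed.

(* If no edge joins the neighbours N of v to its non-neighbours M, split off M; an edge
   between them lies inside P or inside Q, and [homogeneous_split_far_side] applies. *)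
Lemma homogeneous_split_add_vertex P Q v :
  [disjoint P & Q] -> v \notin P :|: Q -> (forall a b, a \in P -> b \in Q -> r a b = false) ->
  P3_free r (v |: (P :|: Q)) -> P != set0 -> Q != set0 ->
  homogeneous_split r (v |: (P :|: Q)).
Proof.
move=> PQ vPQ nPQ freeX P0 Q0.
set N := [set x in P :|: Q | r v x]; set M := (P :|: Q) :\: N.
have [M0 | M0] := eqVneq M set0.
  exists [set v], (P :|: Q), true; split=> //.
  - by rewrite disjoints1.
  - by apply/set0Pn; exists v; rewrite inE.
  - by rewrite setU_eq0 negb_and P0.
  move=> a b; rewrite inE => /eqP-> bPQ; apply/negbNE/negP=> nrvb.
  have: b \in M by rewrite in_setD inE bPQ (negbTE nrvb).
  by rewrite M0 inE.
have [/exists_inP[x xN /exists_inP[y yM rxy]] | noNM] :=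
  boolP [exists x in N, exists y in M, r x y]; last first.
  exists M, (v |: N), false; split=> //.
  - apply/setP=> w; rewrite !inE.
    by case: (w == v); case: (w \in P); case: (w \in Q); case: (r v w).
  - rewrite -setI_eq0; apply/eqP/setP=> w; rewrite !inE.
    case: (eqVneq w v) => [->|_]; last by case: (w \in P); case: (w \in Q); case: (r v w).
    by move: vPQ; rewrite inE => /norP[/negPf-> /negPf->].
  - by apply/set0Pn; exists v; rewrite !inE eqxx.
  move=> a b aM; rewrite in_setU1 => /orP[/eqP -> | bN].
    by move: aM; rewrite r_sym !inE; case: (r v a); rewrite ?andbT //; case: (_ || _).
  by rewrite r_sym; apply/negbTE; move: noNM => /exists_inPn/(_ b bN)/exists_inPn; apply.
move: xN yM; rewrite !inE => /andP[xPQ rvx] /andP[nyN yPQ].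
have nrvy : ~~ r v y by apply: contra nyN => ->; rewrite yPQ.
case/orP: xPQ => [xP | xQ].
  have yP : y \in P by case/orP: yPQ => // yQ; rewrite nPQ in rxy.
  exact: (homogeneous_split_far_side PQ vPQ nPQ freeX Q0 xP yP).
have yQ : y \in Q by case/orP: yPQ => // yP; rewrite r_sym nPQ in rxy.
rewrite setUC in vPQ freeX *.
apply: (homogeneous_split_far_side _ vPQ _ freeX P0 xQ yQ) => //.
  by rewrite disjoint_sym.
by move=> a b aQ bP; rewrite r_sym nPQ.
Qed.
End AddVertex.

Lemma P3_free_homogeneous_split r X : symmetric r -> irreflexive r ->
  1 < #|X| -> P3_free r X -> homogeneous_split r X.
Proof.
move=> r_sym r_irr; elim: {X}_.+1 {-2}X (ltnSn #|X|) => // k IH X ltX X2 freeX.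
have /set0Pn [v vX] : X != set0 by rewrite -card_gt0 ltnW.
have defX : X = v |: (X :\ v) by rewrite setD1K.
have cardX : #|X| = #|X :\ v|.+1 by rewrite (cardsD1 v X) vX.
have vXv : v \notin X :\ v by rewrite !inE eqxx.
have [X'2 | X'1] := ltnP 1 #|X :\ v|; last first.
  have /cards1P [u Xu] : #|X :\ v| == 1 by rewrite eqn_leq X'1 -ltnS -cardX.
  exists [set v], (X :\ v), (r v u); split=> //.
  - by rewrite disjoints1.
  - by apply/set0Pn; exists v; rewrite inE.
  - by rewrite Xu; apply/set0Pn; exists u; rewrite inE.
  - by move=> a b; rewrite Xu !inE => /eqP-> /eqP->.
have freeX' : P3_free r (X :\ v) by apply: P3_freeS freeX; apply: subsetDl.
have ltX' : #|X :\ v| < k by rewrite -ltnS -cardX.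
have [P [Q [t [defX' PQ P0 Q0 homPQ]]]] := IH _ ltX' X'2 freeX'.
rewrite defX -defX' in freeX *; rewrite -defX' in vXv.
case: t homPQ => homPQ; last exact: homogeneous_split_add_vertex.
apply/homogeneous_split_compl/homogeneous_split_add_vertex => //.
- exact: compl_rel_sym.
- exact: compl_rel_irr.
- by move=> a b aP bQ; rewrite /compl_rel homPQ ?andbF.
- exact: P3_free_compl.
Qed.

(* R t collects vertices outside X adjacent to all of X if t, and to none of it
   otherwise: split X homogeneously, move its smaller part into R t and recurse. *)
Lemma P3_free_homogeneous_pair_attached r X (R : bool -> {set T}) m :
  symmetric r -> irreflexive r -> P3_free r X ->
  (forall t, [disjoint X & R t]) -> (forall t x y, x \in X -> y \in R t -> r x y = t) ->
  1 < m -> (forall t, 4 * #|R t| < m) -> m <= #|X| + #|R true| + #|R false| ->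
  exists A B (t : bool), [/\ [disjoint A & B], m <= 4 * #|A|, m <= 4 * #|B| &
    forall a b, a \in A -> b \in B -> r a b = t].
Proof.
move=> r_sym r_irr; elim: {X}_.+1 {-2}X (ltnSn #|X|) R => // k IH X ltX R.
move=> freeX XR homXR m1 smallR largeXR.
have X2 : 1 < #|X| by move: (smallR true) (smallR false); lia.
have [A [B [t [defX AB B0 homAB leBA]]]] : exists A B (t : bool),
    [/\ A :|: B = X, [disjoint A & B], B != set0,
        forall a b, a \in A -> b \in B -> r a b = t & #|B| <= #|A|].
  have [A [B [t [defX AB A0 B0 homAB]]]] := P3_free_homogeneous_split r_sym r_irr X2 freeX.
  have [leBA | /ltnW leAB] := leqP #|B| #|A|; first by exists A, B, t.
  exists B, A, t; split=> //; first by rewrite setUC.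
    by rewrite disjoint_sym.
  by move=> a b aB bA; rewrite r_sym homAB.
have cardX : #|X| = #|A| + #|B| by rewrite -defX; apply/eqP; rewrite (leq_card_setU A B).2.
have AX : A \subset X by rewrite -defX subsetUl.
have BX : B \subset X by rewrite -defX subsetUr.
have RB : [disjoint R t & B] by rewrite disjoint_sym (disjointWl BX (XR t)).
have cardRB : #|R t :|: B| = #|R t| + #|B| by apply/eqP; rewrite (leq_card_setU _ _).2.
have ARB : [disjoint A & R t :|: B].
  by rewrite -setI_eq0 setIUr setU_eq0 !setI_eq0 (disjointWl AX (XR t)) AB.
have [largeRB | smallRB] := leqP m (4 * #|R t :|: B|).
  exists (R t :|: B), A, t; split=> //.
  - by rewrite disjoint_sym.
  - by move: (smallR true) (smallR false) cardX largeXR leBA; lia.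
  move=> a b /setUP[aR | aB] bA; rewrite r_sym; last exact: homAB.
  by apply: homXR aR; apply: (subsetP AX).
have ltA : #|A| < k by move: B0 ltX; rewrite -card_gt0 cardX; lia.
pose R' s := if s == t then R t :|: B else R s.
apply: (IH A ltA R' (P3_freeS AX freeX)) => //.
- by move=> s; rewrite /R'; case: eqP => _; last exact: disjointWl AX (XR s).
- move=> s x y xA; rewrite /R'; case: eqP => [-> /setUP[yR | yB] | _].
  + by apply: homXR yR; apply: (subsetP AX).
  + exact: homAB.
  + by apply: homXR; apply: (subsetP AX).
- by move=> s; rewrite /R'; case: eqP.
- by rewrite /R'; case: t {homAB RB ARB R'} cardRB smallRB => /= cardRB _; move: cardX largeXR; lia.
Qed.

Lemma P3_free_homogeneous_pair r X : symmetric r -> irreflexive r -> 1 < #|X| -> P3_free r X ->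
  exists A B (t : bool), [/\ [disjoint A & B], #|X| <= 4 * #|A|, #|X| <= 4 * #|B| &
    forall a b, a \in A -> b \in B -> r a b = t].
Proof.
move=> r_sym r_irr X2 freeX.
apply: (@P3_free_homogeneous_pair_attached r X (fun=> set0) #|X| r_sym r_irr freeX) => //.
- by move=> t; rewrite -setI_eq0 setI0.
- by move=> t x y _; rewrite inE.
- by move=> t; rewrite cards0 muln0 ltnW.
- by rewrite cards0 !addn0.
Qed.
End Cographs.

Section Packings.
Variables (n : nat) (G : {set {set 'I_n}}).

Lemma adj_sym : symmetric (adj G).
Proof. by move=> u v; rewrite /adj eq_sym setUC. Qed.

Lemma adj_irr : irreflexive (adj G).
Proof. by move=> u; rewrite /adj eqxx. Qed.

Definition P3_packing (S : {set quad n}) : bool :=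
  [forall x in S, induced_P3 G x] &&
  [forall x in S, forall y in S, (x != y) ==> [disjoint qverts x & qverts y]].

Lemma card_qverts (x : quad n) : #|qverts x| <= 4.
Proof.
case: x => [[[a b] c] d] /=; apply: leq_trans (card_size [:: a; b; c; d]).
by apply/subset_leq_card/subsetP => x; rewrite !inE -!orbA.
Qed.

Lemma card_bigcup_qverts (S : {set quad n}) : #|\bigcup_(x in S) qverts x| <= 4 * #|S|.
Proof.
rewrite mulnC -sum_nat_const; elim/big_rec2: _ => [|x U s _ IH]; first by rewrite cards0.
by rewrite (leq_trans (leq_card_setU _ _)) ?leq_add ?card_qverts.
Qed.

Lemma P3_free_uncovered S : P3_packing S -> (forall S', P3_packing S' -> #|S'| <= #|S|) ->
  P3_free (adj G) (~: \bigcup_(x in S) qverts x).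
Proof.
move=> packS maxS a b c d aW bW cW dW; apply/negP => P3abcd.
pose x : quad n := (a, b, c, d).
have xW : qverts x \subset ~: \bigcup_(y in S) qverts y.
  by apply/subsetP=> z; rewrite !inE -!orbA => /or4P[] /eqP->; rewrite -in_setC.
have xS : x \notin S.
  apply: contraL aW => xS; rewrite inE negbK.
  by apply/bigcupP; exists x; rewrite //= !inE eqxx.
have packxS : P3_packing (x |: S).
  case/andP: packS => /forall_inP P3S /forall_inP disjS.
  apply/andP; split; apply/forall_inP=> y /setU1P[-> | yS] //; first exact: P3S.
    apply/forall_inP=> z /setU1P[-> | zS]; first by rewrite eqxx.
    apply/implyP=> _; apply: disjointWl xW _.
    by rewrite disjoint_sym -subsets_disjoint (bigcup_sup z zS).
  apply/forall_inP=> z /setU1P[-> | zS]; last by move/forall_inP: (disjS y yS); apply.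
  apply/implyP=> _; rewrite disjoint_sym; apply: disjointWl xW _.
  by rewrite disjoint_sym -subsets_disjoint (bigcup_sup y yS).
by move: (maxS _ packxS); rewrite cardsU1 xS ltnn.
Qed.

Lemma homogeneous_pair_of_few_disjoint_P3s : 2 < n ->
  ~~ [exists k : 'I_n.+1, (n <= 100 * k)%N && has_disjoint_P3s G k] ->
  exists (A B : {set 'I_n}) (t : bool), [/\ [disjoint A & B], 6 * n <= 25 * #|A|,
    6 * n <= 25 * #|B| & forall a b, a \in A -> b \in B -> adj G a b = t].
Proof.
move=> n2 fewP3.
have smallS S : P3_packing S -> #|S| <= n %/ 100.
  move=> packS; rewrite leqNgt; apply: contra fewP3 => bigS.
  have kn : (n %/ 100).+1 < n.+1 by rewrite ltnS ltn_Pdiv //; lia.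
  apply/existsP; exists (Ordinal kn); rewrite /= mulnC ltnW ?ltn_ceil //=.
  by apply/existsP; exists S; rewrite bigS.
have pack0 : P3_packing set0 by apply/andP; split; apply/forall_inP=> x; rewrite inE.
have [S packS maxS] := @arg_maxnP _ set0 P3_packing (fun S => #|S|) pack0.
set W := ~: \bigcup_(x in S) qverts x.
have cardW : 96 * n <= 100 * #|W|.
  move: (cardsC (\bigcup_(x in S) qverts x)) (card_bigcup_qverts S) (smallS S packS).
  by rewrite card_ord -/W; move: (leq_trunc_div n 100); lia.
have W2 : 1 < #|W| by lia.
have [A [B [t [AB WA WB homAB]]]] :=
  P3_free_homogeneous_pair adj_sym adj_irr W2 (P3_free_uncovered packS maxS).
(* Restate at type ['I_n], so that [lia] identifies the cardinalities. *)
have WA' : #|W| <= 4 * #|A : {set 'I_n}| := WA.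
have WB' : #|W| <= 4 * #|B : {set 'I_n}| := WB.
by exists A, B, t; split=> //; lia.
Qed.
End Packings.

Section CrossPairs.
Variable n : nat.
Implicit Types (A B : {set 'I_n}) (G : {set {set 'I_n}}).

Definition cross_pairs A B : {set {set 'I_n}} := [set [set x.1; x.2] | x in setX A B].

Lemma cross_pairs_sub A B : [disjoint A & B] -> cross_pairs A B \subset pairs n.
Proof.
move=> AB; apply/subsetP=> _ /imsetP[[a b] /setXP[aA bB] ->].
suff ab : a != b by rewrite inE cards2 ab.
by apply: contraTneq bB => <-; rewrite (disjointFr AB aA).
Qed.

Lemma card_cross_pairs A B : [disjoint A & B] -> #|cross_pairs A B| = #|A| * #|B|.
Proof.
move=> AB; rewrite card_in_imset ?cardsX // => -[a b] [a' b'] /setXP[aA bB] /setXP[aA' bB'] /=.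
have notAB x : x \in A -> x \notin B by move=> xA; rewrite (disjointFr AB xA).
move=> eq_ab; have : b \in [set a'; b'] by rewrite -eq_ab !inE eqxx orbT.
have : a \in [set a'; b'] by rewrite -eq_ab !inE eqxx.
rewrite !inE => /orP[/eqP-> | /eqP ab'] /orP[/eqP ba' | /eqP->] //.
- by move: (notAB a' aA'); rewrite -ba' bB.
all: by move: (notAB a aA); rewrite ab' bB'.
Qed.

Definition large_pair A B : bool :=
  [&& [disjoint A & B], 6 * n <= 25 * #|A| & 6 * n <= 25 * #|B|].

Definition large_homogeneous_pair G (ABt : {set 'I_n} * {set 'I_n} * bool) : bool :=
  let: (A, B, t) := ABt in large_pair A B && [forall e in cross_pairs A B, (e \in G) == t].

Lemma large_homogeneous_pair_of_few_disjoint_P3s G : 2 < n ->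
  ~~ [exists k : 'I_n.+1, (n <= 100 * k)%N && has_disjoint_P3s G k] ->
  [exists ABt, large_homogeneous_pair G ABt].
Proof.
move=> n2 fewP3.
have [A [B [t [AB cardA cardB homAB]]]] := homogeneous_pair_of_few_disjoint_P3s n2 fewP3.
apply/existsP; exists (A, B, t); rewrite /= /large_pair AB cardA cardB.
apply/forall_inP=> _ /imsetP[[a b] /setXP[aA bB] ->] /=.
have ab : a != b by apply: contraTneq bB => <-; rewrite (disjointFr AB aA).
by rewrite -(homAB a b aA bB) /adj ab.
Qed.
End CrossPairs.

Local Open Scope ring_scope.

Section GnpRing.
Variables (R : comPzRingType) (n : nat) (p : R).
Implicit Types (A B : pred {set {set 'I_n}}) (E : {set {set 'I_n}}).

(* Non-pairs get the weight of [e \notin G], matching the [is_graph] filter of [gnp_prob]. *)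
Definition edge_weight (e : {set 'I_n}) (b : bool) : R :=
  if e \in pairs n then (if b then p else 1 - p) else (~~ b)%:R.

Lemma edge_weight_sum e : edge_weight e true + edge_weight e false = 1.
Proof. by rewrite /edge_weight; case: ifP => _; rewrite ?addr0 ?add0r // addrC subrK. Qed.

Lemma prodr_nat_bool (I : finType) (b : pred I) : \prod_i ((b i)%:R : R) = [forall i, b i]%:R.
Proof.
have [/forallP bT | /forallPn [i nbi]] := boolP [forall i, b i].
  by rewrite big1 // => i _; rewrite bT.
by rewrite (bigD1 i) //= (negPf nbi) mul0r.
Qed.

Lemma gnp_weight_prod G :
  (is_graph G)%:R * (p ^+ #|G| * (1 - p) ^+ (#|pairs n| - #|G|)) =
  \prod_e edge_weight e (e \in G).
Proof.
rewrite (bigID (mem (pairs n))) /=.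
under eq_bigr => e ep do rewrite /edge_weight ep.
under [X in _ = _ * X]eq_bigr => e /negPf ep do rewrite /edge_weight ep.
have [graphG | /subsetPn[e eG /negPf ep]] := boolP (is_graph G); last first.
  by rewrite mul0r [X in _ = _ * X](bigD1 e) ?ep //= eG mul0r mulr0.
rewrite mul1r [X in _ = _ * X]big1 ?mulr1 => [|e /negPf ep]; last first.
  by rewrite (contraFN (subsetP graphG e) ep).
rewrite (bigID (mem G)) /=.
rewrite (eq_big (mem G) (fun=> p)) => [||e /andP[_ ->]] //; last first.
  by move=> e; apply/andP/idP => [[] | eG] //; split; first exact: (subsetP graphG).
rewrite [X in _ = _ * X](eq_big (mem (pairs n :\: G)) (fun=> 1 - p))
  => [||e /andP[_ /negPf ->]] //; last first.
  by move=> e; rewrite !inE andbC.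
by rewrite !prodr_const cardsDS.
Qed.

Lemma eq_gnp_prob A B : A =1 B -> gnp_prob p A = gnp_prob p B.
Proof. by move=> eqAB; apply: eq_bigl => G; rewrite eqAB. Qed.

Lemma gnp_prob_edgewise (al : {set 'I_n} -> pred bool) A :
  (forall G, A G = [forall e, al e (e \in G)]) ->
  gnp_prob p A =
  \prod_e ((al e true)%:R * edge_weight e true + (al e false)%:R * edge_weight e false).
Proof.
move=> defA; rewrite bigA_distr (eq_gnp_prob defA) /gnp_prob big_mkcond /=.
apply: eq_bigr => G _.
rewrite (eq_bigr (fun e => (al e (e \in G))%:R * edge_weight e (e \in G))); last first.
  by move=> e _; case: (e \in G).
rewrite big_split /= prodr_nat_bool -gnp_weight_prod.
by case: (is_graph G); case: [forall e, al e (e \in G)]; rewrite /= ?mul1r ?mul0r.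
Qed.

Lemma gnp_probT : gnp_prob p (predT : pred {set {set 'I_n}}) = 1.
Proof.
rewrite (@gnp_prob_edgewise (fun _ _ => true)) => [|G]; last exact/esym/forallP.
by rewrite big1 // => e _; rewrite !mul1r edge_weight_sum.
Qed.

Lemma gnp_probC A : gnp_prob p A + gnp_prob p (fun G => ~~ A G) = 1.
Proof.
rewrite -gnp_probT /gnp_prob [X in _ = X](bigID A) /=.
by congr (_ + _); apply: eq_bigl => G; rewrite andbT.
Qed.

Lemma gnp_prob_constant_on E (t : bool) : E \subset pairs n ->
  gnp_prob p (fun G => [forall e in E, (e \in G) == t]) = (if t then p else 1 - p) ^+ #|E|.
Proof.
move=> /subsetP Epairs.
rewrite (@gnp_prob_edgewise (fun e b => (e \in E) ==> (b == t))) //.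
rewrite (bigID (mem E)) /= [X in _ * X]big1 ?mulr1 => [|e /negPf eE]; last first.
  by rewrite eE !mul1r edge_weight_sum.
rewrite -prodr_const; apply: eq_bigr => e eE.
by rewrite eE /edge_weight Epairs //; case: t; rewrite /= ?mul1r ?mul0r ?addr0 ?add0r.
Qed.
End GnpRing.

Section GnpNum.
Variables (R : numDomainType) (n : nat) (p : R).
Hypotheses (p_ge0 : 0 <= p) (p_le1 : p <= 1).
Implicit Types (A B : pred {set {set 'I_n}}).

Lemma gnp_weight_ge0 (G : {set {set 'I_n}}) : 0 <= p ^+ #|G| * (1 - p) ^+ (#|pairs n| - #|G|).
Proof. by rewrite mulr_ge0 // exprn_ge0 // subr_ge0. Qed.

Lemma le_gnp_prob A B : (forall G, A G -> B G) -> gnp_prob p A <= gnp_prob p B.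
Proof.
move=> subAB; rewrite /gnp_prob [X in X <= _]big_mkcond [X in _ <= X]big_mkcond /=.
apply: ler_sum => G _; case: (is_graph G) => //=.
have [AG | _] := boolP (A G); first by rewrite subAB.
by case: (B G); rewrite ?gnp_weight_ge0.
Qed.

Lemma gnp_prob_exists_le (I : finType) (A : I -> pred {set {set 'I_n}}) :
  gnp_prob p (fun G => [exists i, A i G]) <= \sum_i gnp_prob p (A i).
Proof.
rewrite /gnp_prob big_mkcond /=.
under [X in _ <= X]eq_bigr => i _ do rewrite big_mkcond /=.
rewrite exchange_big /=; apply: ler_sum => G _.
case: (boolP (is_graph G)) => _ /=; last by rewrite big1.
have terms_ge0 i : 0 <= (if A i G then p ^+ #|G| * (1 - p) ^+ (#|pairs n| - #|G|) else 0).
  by case: (A i G); rewrite ?gnp_weight_ge0.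
have [/existsP[i AiG] | _] := boolP [exists i, A i G]; last exact: sumr_ge0.
by rewrite (bigD1 i) //= AiG lerDl sumr_ge0.
Qed.
End GnpNum.

Lemma exprn_1B_le_expR (R : realType) (x : R) (K : nat) : x <= 1 ->
  (1 - x) ^+ K <= expR (- (x * K%:R)).
Proof.
move=> x_le1; rewrite -mulNr expRM_natr.
by apply: lerXn2r; rewrite ?nnegrE ?subr_ge0 ?expR_ge0 //; apply: expR_ge1Dx.
Qed.

Lemma gnp_prob_large_homogeneous_pair_le (R : realType) n (p : R)
    (ABt : {set 'I_n} * {set 'I_n} * bool) : (0 < n)%N ->
  100 / n%:R <= p -> p <= 1 - 100 / n%:R ->
  gnp_prob p (fun G => large_homogeneous_pair G ABt) <= expR (- (4 * n%:R)).
Proof.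
case: ABt => [[A B] t] n_gt0 lb_p ub_p.
have [large | not_large] := boolP (large_pair A B); last first.
  by rewrite /gnp_prob big_pred0 ?expR_ge0 // => G; rewrite /= (negbTE not_large) andbF.
rewrite (@eq_gnp_prob _ _ _ _ (fun G => [forall e in cross_pairs A B, (e \in G) == t])); last first.
  by move=> G; rewrite /= large.
case/and3P: large => AB cardA cardB.
rewrite gnp_prob_constant_on ?cross_pairs_sub // card_cross_pairs //.
have n_pos : 0 < n%:R :> R by rewrite ltr0n.
have y_ge0 : 0 <= 100 / n%:R :> R by rewrite divr_ge0 ?ler0n.
have q_ge0 : 0 <= (if t then p else 1 - p) by case: t; lra.
apply: le_trans (_ : (1 - 100 / n%:R) ^+ (#|A| * #|B|) <= _).
  by apply: lerXn2r; rewrite ?nnegrE //; case: t {q_ge0}; lra.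
have y_le1 : 100 / n%:R <= 1 :> R by lra.
apply: le_trans (exprn_1B_le_expR _ y_le1) _.
rewrite ler_expR lerN2 mulrAC ler_pdivlMr // -!natrM ler_nat.
nia.
Qed.

Lemma sum_pair_index_expR_le (R : realType) n : (0 < n)%N ->
  \sum_(ABt : {set 'I_n} * {set 'I_n} * bool) expR (- (4 * n%:R)) <= expR (- n%:R) :> R.
Proof.
move=> n_gt0; rewrite sumr_const !card_prod card_bool.
rewrite -cardsT -powersetT card_powerset cardsT card_ord.
have pow2_le : (2 ^ n * 2 ^ n * 2 <= 2 ^ (3 * n))%N.
  by rewrite -!expnD -[X in (_ * X)%N]expn1 -expnD leq_exp2l //; lia.
have card_le : (2 ^ n * 2 ^ n * 2)%:R <= expR (3 * n%:R) :> R.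
  apply: le_trans (_ : (2 ^ (3 * n))%:R <= _); first by rewrite ler_nat.
  rewrite natrX -natrM -[X in expR X]mulr1 expRM_natl.
  by apply: lerXn2r; rewrite ?nnegrE ?expR_ge0 // (le_trans _ (expR_ge1Dx 1)).
rewrite -[_ *+ _]mulr_natl (le_trans (ler_wpM2r (expR_ge0 _) card_le)) //.
by rewrite -expRD ler_expR; lra.
Qed.

Lemma gnp_prob_few_disjoint_P3s_le (R : realType) n (p : R) : (2 < n)%N ->
  100 / n%:R <= p -> p <= 1 - 100 / n%:R ->
  gnp_prob p (fun G : {set {set 'I_n}} =>
    ~~ [exists k : 'I_n.+1, (n <= 100 * k)%N && has_disjoint_P3s G k]) <= expR (- n%:R).
Proof.
move=> n_gt2 lb_p ub_p.
have y_ge0 : 0 <= 100 / n%:R :> R by rewrite divr_ge0 ?ler0n.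
have p_ge0 : 0 <= p by lra.
have p_le1 : p <= 1 by lra.
have few_large G := @large_homogeneous_pair_of_few_disjoint_P3s n G n_gt2.
apply: le_trans (le_gnp_prob p_ge0 p_le1 few_large) _.
apply: le_trans (gnp_prob_exists_le p_ge0 p_le1 _) _.
apply: le_trans (sum_pair_index_expR_le _ (ltnW (ltnW n_gt2)))=> //.
by apply: ler_sum => ABt _; apply: gnp_prob_large_homogeneous_pair_le => //; lia.
Qed.

Theorem mainTheorem13 :
  exists c : Rdefinitions.R, 0 < c /\
  exists n0 : nat, forall n : nat, (n0 <= n)%N ->
  forall p : Rdefinitions.R,
    100 / n%:R <= p -> p <= 1 - 100 / n%:R ->
    1 - expR (- (c * n%:R)) <=
      gnp_prob p (fun G : {set {set 'I_n}} => [exists k : 'I_n.+1,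
                              (n <= 100 * k)%N && has_disjoint_P3s G k]).
Proof.
exists 1; split=> //; exists 3%N => n n_ge3 p lb_p ub_p.
have := gnp_probC p (fun G : {set {set 'I_n}} =>
  [exists k : 'I_n.+1, (n <= 100 * k)%N && has_disjoint_P3s G k]).
have := gnp_prob_few_disjoint_P3s_le n_ge3 lb_p ub_p.
rewrite mul1r; lra.
Qed.
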